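(* Let $3\le p<n$, let $c\in\mathbb{R}^A$, let $s\in V\setminus\{n\}$, $t\in V\setminus\{0\}$ with $s\neq t$, and let $R\subseteq V\setminus\{s,t,0,n\}$ with $|R|\ge 2$. Suppose that one of the conditions (i)–(iv) below holds, and that $c_{ij}=\beta$ for all arcs $(i,j)$ of some unbalanced 1-tree $H$ on $R$. Then $c_{ij}=\beta$ for all $(i,j)\in A(R)$, and there are $\sigma,\tau$ with $c_{si}=\sigma$ and $c_{it}=\tau$ for all $i\in R$. Conditions: (i) $|R|\ge 5$ and $c_{ik}+c_{kj}=c_{il}+c_{lj}$ for all distinct $i\in R\cup\{s\}$, $j\in R\cup\{t\}$, $k,l\in R$; (ii) $|R|\ge p\ge 4$ and $c(P)$ is constant over all simple directed $(s,t)$-paths with $p$ arcs whose internal nodes lie in $R$; (iii) $|R|=p-1$, $c(P)$ is constant over all simple directed $(s,t)$-paths with $p$ arcs whose internal nodes are exactly the nodes of $R$, and for some $2\le r<p$, $c(P)$ is constant over all simple directed $(s,t)$-paths with $r$ arcs whose $r-1$ internal nodes lie in $R$; (iv) $p=3$, $|R|\ge3$, $c(P)$ is constant over all simple directed $(s,t)$-paths with 3 arcs whose internal nodes lie in $R$, and $c(P)$ is constant over all simple directed $(s,t)$-paths with 2 arcs whose inner node lies in $R$.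
   Context: Let $n$ be a positive integer, $V=\{0,1,\dots,n\}$, and let $D=(V,A)$ be the digraph whose arc set $A$ consists of all ordered pairs $(i,j)$ with $i\neq j$, $i,j\in V$, except that no arc enters node $0$, no arc leaves node $n$, and the arc $(0,n)$ is absent. $c(P)=\sum_{(i,j)\in P}c_{ij}$; $A(R)$ is the set of arcs of $A$ with both endnodes in $R$. A balanced cycle is a simple cycle of the underlying undirected graph (arcs traversed in either direction) that contains the same number of forward and backward arcs. An unbalanced 1-tree on $R$ is a set of arcs of $A(R)$ consisting of a spanning tree $T$ of $R$ (ignoring orientations) plus one further arc $(k,l)$ whose fundamental cycle with respect to $T$ is not balanced. *)

(* Nodes V = {0,...,n} are 'I_n.+1; node 0 is ord0, node n is ord_max. *)
From HB Require Import structures.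
From mathcomp Require Import all_boot all_order all_algebra.
From mathcomp Require Export reals.
Set Implicit Arguments. Unset Strict Implicit. Unset Printing Implicit Defensive.
Import Order.TTheory GRing.Theory Num.Theory.
Local Open Scope ring_scope.

Notation node n := 'I_n.+1.

Definition is_arc n (i j : node n) : bool :=
  [&& i != j, j != ord0, i != ord_max & ~~ ((i == ord0) && (j == ord_max))].

Definition arcsR n (Rs : {set node n}) : {set node n * node n} :=
  [set e | is_arc e.1 e.2 && ((e.1 \in Rs) && (e.2 \in Rs))].

(* A step of an undirected traversal: an arc together with its direction
   (true = traversed forward, false = backward). *)
Definition step n := ((node n * node n) * bool)%type.
Definition stail n (x : step n) : node n := if x.2 then x.1.1 else x.1.2.
Definition shead n (x : step n) : node n := if x.2 then x.1.2 else x.1.1.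

Fixpoint walk n (E : {set node n * node n}) (u v : node n) (w : seq (step n)) : bool :=
  match w with
  | [::] => u == v
  | x :: w' => [&& x.1 \in E, stail x == u & walk E (shead x) v w']
  end.

Definition is_cycle n (E : {set node n * node n}) (C : seq (step n)) : bool :=
  [&& (if C is x :: _ then walk E (stail x) (stail x) C else false),
      uniq (map fst C) & uniq (map (@stail n) C)].

Definition balanced n (C : seq (step n)) : bool :=
  count (fun x : step n => x.2) C == count (fun x : step n => ~~ x.2) C.

Definition spanning_tree n (Rs : {set node n}) (T : {set node n * node n}) : Prop :=
  [/\ T \subset arcsR Rs,
      (forall u v, u \in Rs -> v \in Rs -> exists w, walk T u v w)
    & (forall C, ~~ is_cycle T C)].

Definition unbalanced_1tree n (Rs : {set node n}) (H : {set node n * node n}) : Prop :=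
  exists T k l,
    [/\ spanning_tree Rs T, (k, l) \in arcsR Rs, (k, l) \notin T,
        H = (k, l) |: T
      & exists C, [/\ is_cycle H C, (k, l) \in map fst C & ~~ balanced C]].

Definition dipath n (s t : node n) (q : seq (node n)) : bool :=
  path (@is_arc n) s (rcons q t) && uniq (s :: rcons q t).

Definition path_cost (R : realType) n (c : node n -> node n -> R)
  (s t : node n) (q : seq (node n)) : R :=
  \sum_(e <- zip (s :: q) (rcons q t)) c e.1 e.2.

Definition const_paths (R : realType) n (c : node n -> node n -> R)
  (s t : node n) (P : seq (node n) -> bool) : Prop :=
  forall q1 q2, dipath s t q1 -> dipath s t q2 -> P q1 -> P q2 ->
    path_cost c s t q1 = path_cost c s t q2.

Definition inner_in n (Rs : {set node n}) (m : nat) (q : seq (node n)) : bool :=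
  ((size q).+1 == m)%N && all (fun x => x \in Rs) q.

From HB Require Import structures.
From mathcomp Require Import all_boot all_order all_algebra.
From mathcomp Require Import reals.
From mathcomp Require Import ring lra.
Import Order.TTheory GRing.Theory Num.Theory.
Set Implicit Arguments. Unset Strict Implicit. Unset Printing Implicit Defensive.
Local Open Scope ring_scope.

(* If all 3-arc paths s a b t with a != b in R cost K3 and all 2-arc paths s a t cost K2,
   then c a b = pi a - pi b + delta on A(R), with pi a = c a t and delta = K3 - K2.
   Summing c along the fundamental cycle of the unbalanced 1-tree, whose arcs all cost
   beta, gives (#forward - #backward) (beta - delta) = 0, hence delta = beta; along the
   spanning tree pi is then constant, which yields all the conclusions.  Each of the
   conditions (i)-(iv) gives the two constancy properties, by comparing paths that differ
   by the exchange of one inner node or by the transposition of two adjacent ones. *)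

Definition uniq_in (T : finType) (A : {set T}) (q : seq T) :=
  uniq q && all (fun x => x \in A) q.

Lemma uniq_in_subseq (T : finType) (A : {set T}) (q q' : seq T) :
  subseq q q' -> uniq_in A q' -> uniq_in A q.
Proof.
move=> sub /andP [uq' /allP q'A]; rewrite /uniq_in (subseq_uniq sub uq').
by apply/allP => x /(mem_subseq sub) /q'A.
Qed.

Lemma uniq_in_perm (T : finType) (A : {set T}) (q q' : seq T) :
  perm_eq q q' -> uniq_in A q = uniq_in A q'.
Proof. by move=> qq'; rewrite /uniq_in (perm_uniq qq') (perm_all _ qq'). Qed.

Lemma exists_fresh (T : finType) (A : {set T}) (L : seq T) :
  (size L < #|A|)%N -> exists2 x, x \in A & x \notin L.
Proof.
move=> ltLA; apply/subsetPn; apply: contraTN ltLA => /subset_leq_card leAL.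
by rewrite -leqNgt (leq_trans leAL (card_size L)).
Qed.

Lemma exists_filler (T : finType) (A : {set T}) (L : seq T) k :
  uniq_in A L -> (size L + k <= #|A|)%N -> exists2 F, size F = k & uniq_in A (L ++ F).
Proof.
move=> /andP [uL LA] leLkA; set W := [seq x <- enum A | x \notin L].
have LW : uniq_in A (L ++ W).
  rewrite /uniq_in all_cat LA cat_uniq uL filter_uniq ?enum_uniq //=.
  rewrite andbT; apply/andP; split.
    by apply/hasPn => x; rewrite mem_filter => /andP [].
  by apply/allP => x; rewrite mem_filter mem_enum => /andP [].
have leAW : (#|A| <= size L + size W)%N.
  rewrite -size_cat (leq_trans _ (card_size _)) // subset_leq_card //.
  apply/subsetP => x xA; rewrite mem_cat mem_filter mem_enum xA andbT.
  by case: (x \in L).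
exists (take k W); first by rewrite size_takel // -(leq_add2l (size L)) (leq_trans leLkA).
by apply: uniq_in_subseq LW; rewrite cat_subseq ?take_subseq.
Qed.

Lemma offdiag_const (T : finType) (U : Type) (A : {set T}) (f : T -> T -> U) :
  (2 < #|A|)%N ->
  (forall a a' b, a \in A -> a' \in A -> b \in A ->
     uniq [:: a; a'; b] -> f a b = f a' b) ->
  (forall a b b', a \in A -> b \in A -> b' \in A ->
     uniq [:: a; b; b'] -> f a b = f a b') ->
  forall a b a' b', a \in A -> b \in A -> a' \in A -> b' \in A -> a != b -> a' != b' ->
  f a b = f a' b'.
Proof.
move=> A3 f1 f2.
have {}f1 a a' b : a \in A -> a' \in A -> b \in A -> a != b -> a' != b -> f a b = f a' b.
  move=> aA a'A bA ab a'b; have [-> // | aa'] := eqVneq a a'.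
  by apply: f1; rewrite //= !inE negb_or aa' ab a'b.
have {}f2 a b b' : a \in A -> b \in A -> b' \in A -> a != b -> a != b' -> f a b = f a b'.
  move=> aA bA b'A ab ab'; have [-> // | bb'] := eqVneq b b'.
  by apply: f2; rewrite //= !inE negb_or ab ab' bb'.
move=> a b a' b' aA bA a'A b'A ab a'b'.
have [a'b | a'b] := eqVneq a' b; last by rewrite (f1 a a' b) // (f2 a' b b').
have [x xA] := exists_fresh (L := [:: a; b]) A3.
rewrite !inE negb_or eq_sym [x == b]eq_sym => /andP [ax bx].
rewrite a'b in a'A a'b' *.
by rewrite (f2 a b x) // (f1 a b x) // (f2 b x b').
Qed.

Section Potentials.
Variables (R : numDomainType) (n : nat) (pi : node n -> R) (d : R).

Definition forward_excess (w : seq (step n)) : R :=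
  (count (fun x : step n => x.2) w)%:R - (count (fun x : step n => ~~ x.2) w)%:R.

Lemma walk_potential (E : {set node n * node n}) u v w :
  {in E, forall e, pi e.1 - pi e.2 = d} -> walk E u v w ->
  pi u - pi v = forward_excess w * d.
Proof.
move=> Ed; elim: w u => [|[[i j] b] w IHw] u /=.
  by move/eqP->; rewrite /forward_excess !subrr mul0r.
case/and3P=> /Ed /= ijd /eqP <- {}/IHw; rewrite /stail /shead /forward_excess.
case: b => /= IHw; rewrite !natrD.
  by rewrite -(subrKA (pi j)) ijd IHw; ring.
by rewrite -(subrKA (pi i)) -opprB ijd IHw; ring.
Qed.

Lemma unbalanced_cycle_step0 (E : {set node n * node n}) C :
  {in E, forall e, pi e.1 - pi e.2 = d} -> is_cycle E C -> ~~ balanced C -> d = 0.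
Proof.
move=> Ed; case: C => // x C /and3P [/(walk_potential Ed) + _ _] unbalC.
rewrite subrr => /esym/eqP; rewrite mulf_eq0 subr_eq0 eqr_nat.
by move: unbalC; rewrite /balanced => /negbTE-> /eqP.
Qed.

Lemma unbalanced_1tree_potential (Rs : {set node n}) H :
  unbalanced_1tree Rs H -> {in H, forall e, pi e.1 - pi e.2 = d} ->
  d = 0 /\ {in Rs &, forall u v, pi u = pi v}.
Proof.
case=> T [k [l [[_ Tconn _] _ _ -> [C [Ccyc _ unbalC]]]]] Hd.
have d0 := unbalanced_cycle_step0 Hd Ccyc unbalC; split=> // u v uR vR.
have Td : {in T, forall e, pi e.1 - pi e.2 = d}.
  by move=> e eT; apply: Hd; rewrite in_setU1 eT orbT.
have [w /(walk_potential Td)] := Tconn u v uR vR.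
by rewrite d0 mulr0 => /eqP; rewrite subr_eq0 => /eqP.
Qed.

End Potentials.

Section ArcCosts.
Variables (R : realType) (n : nat) (c : node n -> node n -> R) (s t : node n)
          (Rs : {set node n}).

Definition two_arc_const :=
  forall a a', a \in Rs -> a' \in Rs -> c s a + c a t = c s a' + c a' t.

Definition three_arc_const :=
  forall a b a' b', a \in Rs -> b \in Rs -> a' \in Rs -> b' \in Rs -> a != b -> a' != b' ->
  c s a + c a b + c b t = c s a' + c a' b' + c b' t.

Definition swap_invariant :=
  forall i j k l, i \in s |: Rs -> j \in t |: Rs -> k \in Rs -> l \in Rs ->
  uniq [:: i; j; k; l] -> c i k + c k j = c i l + c l j.

Lemma arc_cost_potential :
  (1 < #|Rs|)%N -> three_arc_const -> two_arc_const ->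
  exists delta, forall a b, a \in Rs -> b \in Rs -> a != b -> c a b = c a t - c b t + delta.
Proof.
move=> R2 three two; have [a0 a0R _] := exists_fresh (L := [::]) (ltnW R2).
have [b0 b0R] := exists_fresh (L := [:: a0]) R2; rewrite inE => b0a0.
exists (c s b0 + c b0 a0 + c a0 t - (c s a0 + c a0 t)) => a b aR bR ab.
have := three a b b0 a0 aR bR b0R a0R ab b0a0; have := two a a0 aR a0R.
by move=> *; lra.
Qed.

Lemma unbalanced_1tree_sub H : unbalanced_1tree Rs H -> H \subset arcsR Rs.
Proof.
by case=> T [k [l [[TR _ _] klR _ -> _]]]; rewrite subUset sub1set klR.
Qed.

Lemma const_arcs_of_1tree (beta : R) :
  (1 < #|Rs|)%N -> three_arc_const -> two_arc_const ->
  (exists H, unbalanced_1tree Rs H /\ forall e, e \in H -> c e.1 e.2 = beta) ->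
  (forall e, e \in arcsR Rs -> c e.1 e.2 = beta) /\
  exists sigma tau, forall i, i \in Rs -> c s i = sigma /\ c i t = tau.
Proof.
move=> R2 three two [H [tree Hbeta]].
have [delta pot] := arc_cost_potential R2 three two.
have arcR e : e \in arcsR Rs -> [/\ e.1 \in Rs, e.2 \in Rs & e.1 != e.2].
  by rewrite inE => /andP [/and4P [? _ _ _] /andP [? ?]].
have Hpot : {in H, forall e, c e.1 t - c e.2 t = beta - delta}.
  move=> e eH; have [e1R e2R e12] := arcR e (subsetP (unbalanced_1tree_sub tree) e eH).
  by rewrite -(Hbeta e eH) (pot _ _ e1R e2R e12) addrK.
have [/eqP bd pi_const] := unbalanced_1tree_potential (pi := c^~ t) tree Hpot.
split=> [e /arcR [e1R e2R e12] | ].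
  by rewrite pot // (pi_const _ _ e1R e2R) subrr add0r; move: bd; rewrite subr_eq0 => /eqP.
have [a0 a0R _] := exists_fresh (L := [::]) (ltnW R2).
exists (c s a0), (c a0 t) => i iR; split; last exact: pi_const.
by apply: (addIr (c a0 t)); rewrite -{1}(pi_const i a0) //; apply: two.
Qed.

End ArcCosts.

Section PathCost.
Variables (R : realType) (n : nat) (c : node n -> node n -> R).

Lemma path_cost_nil s t : path_cost c s t [::] = c s t.
Proof. by rewrite /path_cost /= big_seq1. Qed.

Lemma path_cost_cons s t a q : path_cost c s t (a :: q) = c s a + path_cost c a t q.
Proof. by rewrite /path_cost /= big_cons. Qed.

Lemma path_cost_cat s t q x q' :
  path_cost c s t (q ++ x :: q') = path_cost c s x q + path_cost c x t q'.
Proof.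
elim: q s => [|a q IHq] s /=; first by rewrite path_cost_cons path_cost_nil.
by rewrite !path_cost_cons IHq addrA.
Qed.

End PathCost.

Section InnerPaths.
Variables (n : nat) (s t : node n) (Rs : {set node n}).
Hypotheses (s_n : s != ord_max) (t_0 : t != ord0) (s_t : s != t)
           (Rs_inner : Rs \subset ~: [set s; t; ord0; ord_max]).

Lemma notin_ends x : x \in Rs -> [/\ x != s, x != t, x != ord0 & x != ord_max].
Proof.
move/(subsetP Rs_inner); rewrite !inE !negb_or.
by case/andP=> /andP [/andP [-> ->] ->] ->.
Qed.

Lemma dipath_uniq_in q : q != [::] -> uniq_in Rs q -> dipath s t q.
Proof.
case: q => // a q _ /andP [uq /allP qR].
have ends x : x \in a :: q -> [/\ x != s, x != t, x != ord0 & x != ord_max].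
  by move/qR; apply: notin_ends.
have [a_s _ a_0 a_n] := ends a (mem_head a q).
have [_ l_t l_0 l_n] := ends _ (mem_last a q).
have arcs : pairwise (@is_arc n) (a :: q).
  move: uq; rewrite uniq_pairwise; apply: (sub_in_pairwise (P := [in Rs])); last exact/allP.
  move=> x y /notin_ends [_ _ x_0 x_n] /notin_ends [_ _ y_0 _] /= xy.
  by rewrite /is_arc xy y_0 x_n (negbTE x_0).
have arc_sa : is_arc s a by rewrite /is_arc eq_sym a_s a_0 s_n (negbTE a_n) andbF.
have arc_lt : is_arc (last a q) t by rewrite /is_arc l_t t_0 l_n (negbTE l_0).
have path_aq : path (@is_arc n) a q := pairwise_sorted arcs.
apply/andP; split; first by rewrite rcons_path /= arc_sa path_aq arc_lt.
rewrite cons_uniq mem_rcons rcons_uniq uq inE negb_or s_t !andbT /=.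
by apply/andP; split; apply/negP => /ends []; rewrite eqxx.
Qed.

Lemma const_paths_spanning (R : realType) (c : node n -> node n -> R) :
  const_paths c s t (fun q => ((size q).+1 == #|Rs|.+1)%N && ([set x in q] == Rs)) ->
  const_paths c s t (inner_in Rs #|Rs|.+1).
Proof.
have spanning q : dipath s t q -> inner_in Rs #|Rs|.+1 q ->
    ((size q).+1 == #|Rs|.+1)%N && ([set x in q] == Rs).
  case/andP=> _; rewrite cons_uniq rcons_uniq => /and3P [_ _ uq] /andP [sz /allP qR].
  rewrite sz eqEcard cardsE (card_uniqP uq) -ltnS (eqP sz) leqnn andbT.
  by apply/subsetP => x; rewrite inE => /qR.
move=> hc q1 q2 d1 d2 i1 i2.
exact: hc (spanning _ d1 i1) (spanning _ d2 i2).
Qed.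

Section Exchanges.
Variables (R : realType) (c : node n -> node n -> R) (m : nat).
Hypothesis const_m : const_paths c s t (inner_in Rs m).

Lemma inner_path_cost_eq q1 q2 :
  q1 != [::] -> q2 != [::] -> uniq_in Rs q1 -> uniq_in Rs q2 ->
  (size q1).+1 = m -> (size q2).+1 = m -> path_cost c s t q1 = path_cost c s t q2.
Proof.
have inner q : uniq_in Rs q -> (size q).+1 = m -> inner_in Rs m q.
  by case/andP=> _ qR <-; rewrite /inner_in eqxx.
move=> q1_0 q2_0 u1 u2 sz1 sz2.
by apply: const_m; rewrite ?dipath_uniq_in ?inner.
Qed.

Lemma const_paths_replace P S x y :
  uniq_in Rs (x :: y :: P ++ S) -> (size (P ++ S)).+2 = m ->
  path_cost c s t (P ++ x :: S) = path_cost c s t (P ++ y :: S).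
Proof.
move=> uxy sz; have perm_mid z : perm_eq (P ++ z :: S) (z :: P ++ S).
  by rewrite (perm_catCA P [:: z] S).
have size_mid z : (size (P ++ z :: S)).+1 = m by rewrite size_cat addnS -size_cat.
apply: inner_path_cost_eq; rewrite ?size_mid // -?size_eq0 ?size_cat ?addnS //.
  rewrite (uniq_in_perm _ (perm_mid x)); apply: uniq_in_subseq uxy.
  exact: (cat_subseq (subseq_refl [:: x]) (subseq_cons _ y)).
by rewrite (uniq_in_perm _ (perm_mid y)) (uniq_in_subseq _ uxy) ?subseq_cons.
Qed.

Lemma const_paths_transpose P S a b :
  uniq_in Rs (a :: b :: P ++ S) -> (size (P ++ S)).+3 = m ->
  path_cost c s t (P ++ a :: b :: S) = path_cost c s t (P ++ b :: a :: S).
Proof.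
move=> uab sz.
have perm_ab : perm_eq (P ++ a :: b :: S) (a :: b :: P ++ S).
  by rewrite (perm_catCA P [:: a; b] S).
have perm_ba : perm_eq (P ++ b :: a :: S) (a :: b :: P ++ S).
  by rewrite (perm_catCA P [:: b; a] S) (perm_catCA [:: b] [:: a]).
have size_mid z w : (size (P ++ z :: w :: S)).+1 = m.
  by rewrite size_cat !addnS -size_cat.
apply: inner_path_cost_eq; rewrite ?size_mid // -?size_eq0 ?size_cat ?addnS //.
  by rewrite (uniq_in_perm _ perm_ab).
by rewrite (uniq_in_perm _ perm_ba).
Qed.

Lemma const_paths_swap i j k l :
  (4 <= m <= #|Rs|)%N -> i \in s |: Rs -> j \in t |: Rs -> k \in Rs -> l \in Rs ->
  uniq [:: i; j; k; l] -> (i != s) || (j != t) -> c i k + c k j = c i l + c l j.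
Proof.
move=> /andP [m4 mR] + + kR lR uijkl; rewrite !in_setU1.
have uklij : uniq [:: k; l; i; j] by rewrite (uniq_catC [:: k; l] [:: i; j]).
have uniq_in_sub q : subseq q [:: k; l; i; j] -> all (fun x => x \in Rs) q -> uniq_in Rs q.
  by move=> sub qR; rewrite /uniq_in qR (subseq_uniq sub uklij).
have [-> _ | _ /= iR] := eqVneq i s; have [-> _ | _ /= jR] := eqVneq j t;
  rewrite ?eqxx //= => _.
- have uL : uniq_in Rs [:: k; l; j].
    apply: uniq_in_sub (cat_subseq (subseq_refl [:: k; l]) (subseq_cons [:: j] i)) _.
    by rewrite /= kR lR jR.
  have /(exists_filler uL) [F sF uF] : (3 + (m - 3) <= #|Rs|)%N.
    by rewrite subnKC // ltnW.
  have sz : (size ([::] ++ j :: F)).+2 = m by rewrite /= sF -addn3 subnK // ltnW.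
  have := const_paths_replace (P := [::]) (x := k) (y := l) uF sz.
  by rewrite !path_cost_cons => eq_cost; lra.
- have uL : uniq_in Rs [:: k; l; i].
    apply: uniq_in_sub (cat_subseq (subseq_refl [:: k; l; i]) (sub0seq [:: j])) _.
    by rewrite /= kR lR iR.
  have /(exists_filler uL) [F sF uF] : (3 + (m - 3) <= #|Rs|)%N.
    by rewrite subnKC // ltnW.
  have perm_F : perm_eq ([:: k; l; i] ++ F) (k :: l :: (F ++ [:: i]) ++ [::]).
    by rewrite cats0 !perm_cons perm_sym perm_catC.
  rewrite (uniq_in_perm _ perm_F) in uF.
  have sz : (size ((F ++ [:: i]) ++ [::])).+2 = m.
    by rewrite cats0 size_cat sF addn1 -addn3 subnK // ltnW.
  have := const_paths_replace (P := F ++ [:: i]) (x := k) (y := l) uF sz.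
  by rewrite !path_cost_cat !path_cost_nil => eq_cost; lra.
- have uL : uniq_in Rs [:: k; l; i; j] by rewrite /uniq_in uklij /= kR lR iR jR.
  have /(exists_filler uL) [F sF uF] : (4 + (m - 4) <= #|Rs|)%N by rewrite subnKC.
  have sz : (size ([:: i] ++ j :: F)).+2 = m by rewrite /= sF -addn4 subnK.
  have := const_paths_replace (P := [:: i]) (x := k) (y := l) uF sz.
  by rewrite !path_cost_cat !path_cost_cons !path_cost_nil => eq_cost; lra.
Qed.

Lemma const_paths_swap_invariant : (4 <= m <= #|Rs|)%N -> swap_invariant c s t Rs.
Proof.
move=> mR i j k l iS jT kR lR uijkl.
have [i_s | i_s] := eqVneq i s; last by apply: const_paths_swap; rewrite ?i_s.
have [j_t | j_t] := eqVneq j t; last by apply: const_paths_swap; rewrite ?j_t ?orbT.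
subst i j; case/and4P: uijkl; rewrite in_cons negb_or => /andP [_ skl] tkl.
rewrite inE => kl _.
have R4 : (3 < #|Rs|)%N by case/andP: mR => m4; apply: leq_trans.
have [x xR xkl] := exists_fresh (L := [:: k; l]) (ltnW R4).
have [y yR] := exists_fresh (L := [:: x; k; l]) R4.
rewrite in_cons negb_or => /andP [yx ykl].
have uniq4 a b : a != b -> a \notin [:: k; l] -> b \notin [:: k; l] -> uniq [:: a; b; k; l].
  by move=> ab akl bkl; rewrite /= in_cons negb_or ab akl bkl inE kl.
have [xs xt _ _] := notin_ends xR; have [ys yt _ _] := notin_ends yR.
have sy : s != y by rewrite eq_sym.
have xy : x != y by rewrite eq_sym.
(* c i k + c k j - (c i l + c l j) splits as f i + g j, so the instance (s, t) follows
   from the instances (s, y), (x, t) and (x, y). *)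
have sY : c s k + c k y = c s l + c l y.
  apply: (const_paths_swap mR (setU11 _ _) (setU1r _ yR) kR lR (uniq4 _ _ sy skl ykl)).
  by rewrite yt orbT.
have xT : c x k + c k t = c x l + c l t.
  apply: (const_paths_swap mR (setU1r _ xR) (setU11 _ _) kR lR (uniq4 _ _ xt xkl tkl)).
  by rewrite xs.
have xY : c x k + c k y = c x l + c l y.
  apply: (const_paths_swap mR (setU1r _ xR) (setU1r _ yR) kR lR (uniq4 _ _ xy xkl ykl)).
  by rewrite xs.
lra.
Qed.

Lemma const_paths_transpose_ends a b z :
  (4 <= m <= #|Rs|.+1)%N -> a \in Rs -> b \in Rs -> z \in Rs -> uniq [:: a; b; z] ->
  c s a + c a b + c b z = c s b + c b a + c a z /\
  c z a + c a b + c b t = c z b + c b a + c a t.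
Proof.
move=> /andP [m4 mR] aR bR zR uabz.
have uL : uniq_in Rs [:: a; b; z] by rewrite /uniq_in uabz /= aR bR zR.
have /(exists_filler uL) [F sF uF] : (3 + (m - 4) <= #|Rs|)%N.
  by rewrite -ltnS -addSn subnKC.
split.
  have sz : (size ([::] ++ z :: F)).+3 = m by rewrite /= sF -addn4 subnK.
  have := const_paths_transpose (P := [::]) (a := a) (b := b) uF sz.
  by rewrite !path_cost_cons => eq_cost; lra.
have perm_F : perm_eq ([:: a; b; z] ++ F) (a :: b :: (F ++ [:: z]) ++ [::]).
  by rewrite cats0 !perm_cons perm_sym perm_catC.
rewrite (uniq_in_perm _ perm_F) in uF.
have sz : (size ((F ++ [:: z]) ++ [::])).+3 = m.
  by rewrite cats0 size_cat sF addn1 -addn4 subnK.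
have := const_paths_transpose (P := F ++ [:: z]) (a := a) (b := b) uF sz.
by rewrite !path_cost_cat !path_cost_cons !path_cost_nil => eq_cost; lra.
Qed.

Lemma transpose_three_arc_const :
  (4 <= m <= #|Rs|.+1)%N -> two_arc_const c s t Rs -> three_arc_const c s t Rs.
Proof.
move=> mR two.
have key a b z : a \in Rs -> b \in Rs -> z \in Rs -> uniq [:: a; b; z] ->
    c s a + c a b = c s z + c z b /\ c a b + c b t = c a z + c z t.
  move=> aR bR zR uabz.
  have uazb : uniq (a :: rot 1 [:: b; z]) by rewrite cons_uniq mem_rot rot_uniq.
  have ubza : uniq (rot 1 [:: a; b; z]) by rewrite rot_uniq.
  have [e1 f1] := const_paths_transpose_ends mR aR bR zR uabz.
  have [e2 f2] := const_paths_transpose_ends mR aR zR bR uazb.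
  have [e3 f3] := const_paths_transpose_ends mR bR zR aR ubza.
  have := two z a zR aR; have := two b a bR aR.
  by split; lra.
have R3 : (2 < #|Rs|)%N by case/andP: mR => m4 mR; rewrite -ltnS (leq_trans m4 mR).
apply: (offdiag_const (f := fun a b => c s a + c a b + c b t)) R3 _ _.
  move=> a a' b aR a'R bR uaa'b.
  have uaba' : uniq (a :: rot 1 [:: a'; b]) by rewrite cons_uniq mem_rot rot_uniq.
  by have [e _] := key a b a' aR bR a'R uaba'; lra.
move=> a b b' aR bR b'R uabb'.
by have [_ e] := key a b b' aR bR b'R uabb'; lra.
Qed.

Lemma transpose_two_arc_const :
  (4 <= m <= #|Rs|.+1)%N -> three_arc_const c s t Rs -> two_arc_const c s t Rs.
Proof.
move=> mR three a a' aR a'R; have [-> // | aa'] := eqVneq a a'.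
have R3 : (2 < #|Rs|)%N by case/andP: mR => m4 mR; rewrite -ltnS (leq_trans m4 mR).
have [z zR] := exists_fresh (L := [:: a; a']) R3.
rewrite !inE negb_or => /andP [za za'].
have uaa'z : uniq [:: a; a'; z].
  by rewrite /= !inE negb_or aa' (eq_sym a) za (eq_sym a') za'.
have [e _] := const_paths_transpose_ends mR aR a'R zR uaa'z.
have a'a : a' != a by rewrite eq_sym.
have a'z : a' != z by rewrite eq_sym.
have az : a != z by rewrite eq_sym.
have := three a' a a a' a'R aR aR a'R a'a aa'.
have := three a' z a a' a'R zR aR a'R a'z aa'.
have := three a z a a' aR zR aR a'R az aa'.
lra.
Qed.

End Exchanges.

Section ArcConstancy.
Variables (R : realType) (c : node n -> node n -> R).

Lemma three_arc_const_paths :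
  const_paths c s t (inner_in Rs 3) -> three_arc_const c s t Rs.
Proof.
move=> const3 a b a' b' aR bR a'R b'R ab a'b'.
have uab : uniq_in Rs [:: a; b] by rewrite /uniq_in /= inE ab aR bR.
have ua'b' : uniq_in Rs [:: a'; b'] by rewrite /uniq_in /= inE a'b' a'R b'R.
have := inner_path_cost_eq (q1 := [:: a; b]) (q2 := [:: a'; b']) const3 isT isT uab ua'b'.
by rewrite !path_cost_cons !path_cost_nil !addrA => ->.
Qed.

Lemma two_arc_const_paths :
  const_paths c s t (inner_in Rs 2) -> two_arc_const c s t Rs.
Proof.
move=> const2 a a' aR a'R.
have ua : uniq_in Rs [:: a] by rewrite /uniq_in /= aR.
have ua' : uniq_in Rs [:: a'] by rewrite /uniq_in /= a'R.
have := inner_path_cost_eq (q1 := [:: a]) (q2 := [:: a']) const2 isT isT ua ua'.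
by rewrite !path_cost_cons !path_cost_nil => ->.
Qed.

Lemma swap_invariant_arc_const :
  (2 < #|Rs|)%N -> swap_invariant c s t Rs ->
  three_arc_const c s t Rs /\ two_arc_const c s t Rs.
Proof.
move=> R3 swap; have sS := setU11 s Rs; have tT := setU11 t Rs.
have out q : all (fun x => x \in Rs) q -> (s \notin q) && (t \notin q).
  by move/allP=> qR; apply/andP; split; apply/negP => /qR /notin_ends []; rewrite eqxx.
split.
  apply: (offdiag_const (f := fun a b => c s a + c a b + c b t)) R3 _ _.
    move=> a a' b aR a'R bR uaa'b.
    have /andP [sq _] := out [:: b; a; a'] ltac:(by rewrite /= bR aR a'R).
    have ub : uniq (rot 2 [:: a; a'; b]) by rewrite rot_uniq.
    suff : c s a + c a b = c s a' + c a' b by lra.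
    by apply: (swap s b a a' sS (setU1r t bR) aR a'R); rewrite cons_uniq sq ub.
  move=> a b b' aR bR b'R uabb'.
  have /andP [_ tq] := out [:: a; b; b'] ltac:(by rewrite /= aR bR b'R).
  suff : c a b + c b t = c a b' + c b' t by lra.
  apply: (swap a t b b' (setU1r s aR) tT bR b'R).
  by rewrite (uniq_catCA [:: a] [:: t]) cons_uniq tq.
move=> a a' aR a'R; have [-> // | aa'] := eqVneq a a'.
have /andP [sq tq] := out [:: a; a'] ltac:(by rewrite /= aR a'R).
by apply: swap; rewrite //= in_cons negb_or s_t sq tq inE aa'.
Qed.

Lemma spanning_paths_arc_const r :
  (2 <= r <= #|Rs|)%N ->
  const_paths c s t (fun q => ((size q).+1 == #|Rs|.+1)%N && ([set x in q] == Rs)) ->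
  const_paths c s t (inner_in Rs r) ->
  three_arc_const c s t Rs /\ two_arc_const c s t Rs.
Proof.
move=> /andP [r2 rR] /const_paths_spanning span.
case: r r2 rR => [|[|[|[|r]]]] // _ rR const_r.
- have two := two_arc_const_paths const_r; split=> //.
  have [R2 | R3] := eqVneq #|Rs| 2.
    by rewrite R2 in span; apply: three_arc_const_paths.
  apply: (transpose_three_arc_const span _ two).
  by rewrite ltnS leqnn ltn_neqAle eq_sym R3 rR.
- have three := three_arc_const_paths const_r; split=> //.
  by apply: (transpose_two_arc_const span _ three); rewrite ltnS leqnn rR.
- apply: swap_invariant_arc_const (const_paths_swap_invariant const_r _) => //.
  by apply: leq_trans rR.
Qed.

End ArcConstancy.

End InnerPaths.

Theorem corollary5 (R : realType) (n p : nat) (c : node n -> node n -> R)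
  (s t : node n) (Rs : {set node n}) (beta : R) :
  (3 <= p)%N -> (p < n)%N ->
  s != ord_max -> t != ord0 -> s != t ->
  Rs \subset ~: [set s; t; ord0; ord_max] -> (2 <= #|Rs|)%N ->
  (* (i) *)
  ( ((5 <= #|Rs|)%N /\
     forall i j k l, i \in s |: Rs -> j \in t |: Rs -> k \in Rs -> l \in Rs ->
       uniq [:: i; j; k; l] -> c i k + c k j = c i l + c l j)
  (* (ii) *)
  \/ [/\ (4 <= p)%N, (p <= #|Rs|)%N & const_paths c s t (inner_in Rs p)]
  (* (iii) *)
  \/ [/\ #|Rs| = p.-1,
         const_paths c s t (fun q => ((size q).+1 == p)%N && ([set x in q] == Rs))
       & exists r, (2 <= r < p)%N /\ const_paths c s t (inner_in Rs r)]
  (* (iv) *)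
  \/ [/\ p = 3%N, (3 <= #|Rs|)%N, const_paths c s t (inner_in Rs 3)
       & const_paths c s t (inner_in Rs 2)] ) ->
  (exists H, unbalanced_1tree Rs H /\ forall e, e \in H -> c e.1 e.2 = beta) ->
  (forall e, e \in arcsR Rs -> c e.1 e.2 = beta) /\
  exists sigma tau, forall i, i \in Rs -> c s i = sigma /\ c i t = tau.
Proof.
move=> p3 _ s_n t_0 s_t Rs_inner R2 conds tree.
suff [three two] : three_arc_const c s t Rs /\ two_arc_const c s t Rs.
  exact: const_arcs_of_1tree R2 three two tree.
case: conds => [[R5 swap] | [[p4 pR const_p] |
                [[Rp span [r [r2p const_r]]] | [_ _ const3 const2]]]].
- by apply: swap_invariant_arc_const => //; apply: leq_trans R5.
- apply: swap_invariant_arc_const => //; first exact: leq_trans pR.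
  by apply: (const_paths_swap_invariant s_n t_0 s_t Rs_inner const_p); rewrite p4 pR.
- have pE : p = #|Rs|.+1 by rewrite Rp prednK // (leq_trans _ p3).
  rewrite pE in span r2p.
  exact: (spanning_paths_arc_const s_n t_0 s_t Rs_inner r2p span const_r).
- by split; [apply: three_arc_const_paths | apply: two_arc_const_paths].
Qed.
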